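(* Let $\varepsilon>0$, $\theta_0>0$, $\Delta t>0$, $N\in\mathbb{N}$, $h=L/N$, and assume the mobility is constant, $\mathcal{M}\equiv 1$. Consider the scheme: given $\phi^n\in\mathcal{C}_{\rm per}$, find $\phi^{n+1},\mu^{n+1}\in\mathcal{C}_{\rm per}$ with $$\frac{\phi^{n+1}-\phi^n}{\Delta t}=-\mu^{n+1},\qquad \mu^{n+1}=\ln(1+\phi^{n+1})-\ln(1-\phi^{n+1})-\theta_0\phi^n-\varepsilon^2\Delta_h\phi^{n+1}$$ (all operations pointwise on the grid except $\Delta_h$). Given $\phi^n\in\mathcal{C}_{\rm per}$ with $\|\phi^n\|_\infty\le M$ for some $M>0$, there exists a unique solution $\phi^{n+1}\in\mathcal{C}_{\rm per}$ of this scheme with $\|\phi^{n+1}\|_\infty<1$. Moreover, if the initial data satisfy $\|\phi^0\|_\infty\le 1-\delta_0$ for some $\delta_0\in(0,1)$, then there exists $\delta^\star\in(0,1)$, depending upon $\delta_0$ but independent of $\varepsilon$ and $n$, such that the iterates of the scheme satisfy $\|\phi^n\|_\infty\le 1-\delta^\star$ for all $n\in\mathbb{N}$.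
   Context: $\Omega=(0,L)^3$ with periodic boundary conditions. Grid points $p_i=(i-\tfrac12)h$, $h=L/N$. $\mathcal{C}_{\rm per}$ is the space of real grid functions $\nu_{i,j,k}$ on the cell centers $(p_i,p_j,p_k)$, $i,j,k\in\mathbb{Z}$, that are $N$-periodic in each index. The discrete Laplacian is $\Delta_h\nu_{i,j,k}=h^{-2}(\nu_{i+1,j,k}+\nu_{i-1,j,k}+\nu_{i,j+1,k}+\nu_{i,j-1,k}+\nu_{i,j,k+1}+\nu_{i,j,k-1}-6\nu_{i,j,k})$. $\|\nu\|_\infty=\max_{1\le i,j,k\le N}|\nu_{i,j,k}|$. The scheme is a discretization of the Allen–Cahn equation with the Flory–Huggins energy $\int_\Omega (1+\phi)\ln(1+\phi)+(1-\phi)\ln(1-\phi)-\frac{\theta_0}{2}\phi^2+\frac{\varepsilon^2}{2}|\nabla\phi|^2$. *)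

From Stdlib Require Import Reals Lra Lia ZArith List.
Open Scope R_scope.

Definition grid := Z -> Z -> Z -> R.

(* Membership in C_per: N-periodic in each index. *)
Definition periodic (N : nat) (f : grid) : Prop :=
  forall i j k : Z,
    f (i + Z.of_nat N)%Z j k = f i j k /\
    f i (j + Z.of_nat N)%Z k = f i j k /\
    f i j (k + Z.of_nat N)%Z = f i j k.

Definition maxR (n : nat) (g : nat -> R) : R :=
  fold_right Rmax 0 (map g (seq 1 n)).

Definition normInf (N : nat) (f : grid) : R :=
  maxR N (fun i => maxR N (fun j => maxR N (fun k =>
    Rabs (f (Z.of_nat i) (Z.of_nat j) (Z.of_nat k))))).

Definition lap_h (h : R) (f : grid) : grid := fun i j k =>
  (f (i+1)%Z j k + f (i-1)%Z j k + f i (j+1)%Z k + f i (j-1)%Z k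
   + f i j (k+1)%Z + f i j (k-1)%Z - 6 * f i j k) / (h ^ 2).

Definition mu_next (eps theta0 h : R) (phin phi1 : grid) : grid := fun i j k =>
  ln (1 + phi1 i j k) - ln (1 - phi1 i j k) - theta0 * phin i j k
  - eps ^ 2 * lap_h h phi1 i j k.

Definition scheme_step (eps theta0 dt h : R) (phin phi1 : grid) : Prop :=
  forall i j k : Z,
    (phi1 i j k - phin i j k) / dt = - mu_next eps theta0 h phin phi1 i j k.

(** At every grid point the scheme reads
    [g (phi1 p) = (1/dt + theta0) phin p + c * (sum of the six neighbours of phi1)],
    with [c = eps^2/h^2] and [g x = x/dt + ln (1 + x) - ln (1 - x) + 6 c x], an
    increasing bijection from (-1, 1) onto R with slope at least [1/dt + 6 c].
    Solving this pointwise for the centre value given the neighbours (a Jacobi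
    sweep) is therefore a contraction of ratio [6 c / (1/dt + 6 c)] for the sup
    distance; its unique fixed point is the solution, and it is periodic because
    translating it by a period gives another fixed point.
    At a point where [|phi1|] is maximal the neighbour sum is dominated by the
    centre term, which leaves [g0 (|phi1|_inf) <= (1/dt + theta0) |phin|_inf] with
    [g0] the [c = 0] part of [g]. Since [g0 (1 - d) >= (1/dt + theta0) (1 - d)] as
    soon as [d <= exp (- theta0)], the bound [|phi|_inf <= 1 - min delta0 (exp (- theta0))]
    propagates along the iteration. *)

From Stdlib Require Import Reals Lra Lia List ZArith Ranalysis5 FunctionalExtensionality.
From Coquelicot Require Import Rcomplements.
Open Scope R_scope.

(** * Fixed points of sup-norm contractions *)

Section Contraction.

Variables (X : Type) (T : (X -> R) -> (X -> R)) (k : R).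
Hypothesis k_range : 0 <= k < 1.
Hypothesis T_contraction : forall (u v : X -> R) (d : R),
  (forall x, Rabs (u x - v x) <= d) -> forall x, Rabs (T u x - T v x) <= k * d.

Lemma geometric_eventually_lt (d e : R) : 0 < e -> exists n, d * k ^ n < e.
Proof.
  intros He. destruct (Rle_or_lt d 0) as [Hd|Hd].
  - exists 0%nat. simpl. lra.
  - destruct (pow_lt_1_zero k ltac:(rewrite Rabs_pos_eq; lra) (e / d))
      as [n Hn]; [apply Rdiv_lt_0_compat; lra|].
    exists n. specialize (Hn n (le_n n)).
    rewrite Rabs_pos_eq in Hn by (apply pow_le; lra).
    apply (Rmult_lt_compat_l d) in Hn; [|lra].
    replace (d * (e / d)) with e in Hn by (field; lra). exact Hn.
Qed.

Lemma le_0_of_geometric_bound (a d : R) : (forall n, a <= d * k ^ n) -> a <= 0.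
Proof.
  intros H. apply Rnot_lt_le. intros Ha.
  destruct (geometric_eventually_lt d a Ha) as [n Hn].
  specialize (H n). lra.
Qed.

Lemma contraction_fixpoint_unique (u v : X -> R) (d : R) :
  T u = u -> T v = v -> (forall x, Rabs (u x - v x) <= d) -> u = v.
Proof.
  intros Hu Hv Hd.
  assert (Hn : forall n x, Rabs (u x - v x) <= d * k ^ n).
  { induction n as [|n IH]; intros x.
    - rewrite Rmult_1_r. apply Hd.
    - rewrite <- Hu, <- Hv.
      replace (d * k ^ S n) with (k * (d * k ^ n)) by (simpl; ring).
      apply T_contraction, IH. }
  apply functional_extensionality. intros x.
  assert (H0 : Rabs (u x - v x) <= 0)
    by (apply (le_0_of_geometric_bound _ d); intros n; apply Hn).
  revert H0. split_Rabs; lra.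
Qed.

Lemma contraction_iterate_dist (u0 : X -> R) (B : R) :
  (forall x, Rabs (T u0 x - u0 x) <= B) ->
  forall n m x, Rabs (Nat.iter (n + m) T u0 x - Nat.iter n T u0 x) <= B / (1 - k) * k ^ n.
Proof.
  intros HB.
  set (u n := Nat.iter n T u0).
  set (D n := B / (1 - k) * k ^ n).
  assert (Hstep : forall n x, Rabs (u (S n) x - u n x) <= (1 - k) * D n).
  { unfold D. induction n as [|n IH]; intros x.
    - replace ((1 - k) * (B / (1 - k) * k ^ 0)) with B by (simpl; field; lra). apply HB.
    - replace ((1 - k) * (B / (1 - k) * k ^ S n)) with (k * ((1 - k) * (B / (1 - k) * k ^ n)))
        by (simpl; ring).
      apply T_contraction, IH. }
  (* The telescoping bound [D n - D (n + m)] is what survives the induction. *)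
  assert (Htail : forall n m x, Rabs (u (n + m)%nat x - u n x) <= D n - D (n + m)%nat).
  { intros n m x. induction m as [|m IH].
    - rewrite Nat.add_0_r, Rminus_diag, Rminus_diag, Rabs_R0. lra.
    - rewrite Nat.add_succ_r.
      pose proof (Hstep (n + m)%nat x) as Hs.
      replace (D (S (n + m))) with (k * D (n + m)%nat) by (unfold D; simpl; ring).
      revert IH Hs. split_Rabs; lra. }
  intros n m x.
  assert (HD : 0 <= D (n + m)%nat).
  { pose proof (Rle_trans _ _ _ (Rabs_pos _) (HB x)).
    unfold D. apply Rmult_le_pos; [apply Rdiv_le_0_compat|apply pow_le]; lra. }
  pose proof (Htail n m x) as Hnm.
  change (Rabs (u (n + m)%nat x - u n x) <= D n). lra.
Qed.

Lemma contraction_fixpoint_exists (u0 : X -> R) (B : R) :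
  (forall x, Rabs (T u0 x - u0 x) <= B) -> exists v, T v = v.
Proof.
  intros HB.
  set (u n := Nat.iter n T u0).
  set (D n := B / (1 - k) * k ^ n).
  assert (Hfar : forall n m x, Rabs (u (n + m)%nat x - u n x) <= D n)
    by exact (contraction_iterate_dist u0 B HB).
  assert (Hcauchy : forall x, Cauchy_crit (fun n => u n x)).
  { intros x e He.
    destruct (geometric_eventually_lt (B / (1 - k)) (e / 2)) as [N HN]; [lra|].
    exists N. intros n m Hn Hm. unfold R_dist.
    pose proof (Hfar N (n - N)%nat x) as Hn'. pose proof (Hfar N (m - N)%nat x) as Hm'.
    replace (N + (n - N))%nat with n in Hn' by lia.
    replace (N + (m - N))%nat with m in Hm' by lia.
    revert Hn' Hm'. unfold D. split_Rabs; lra. }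
  set (l x := proj1_sig (R_complete _ (Hcauchy x))).
  assert (Hl : forall x, Un_cv (fun n => u n x) (l x))
    by (intros x; exact (proj2_sig (R_complete _ (Hcauchy x)))).
  assert (Hlim : forall n x, Rabs (l x - u n x) <= D n).
  { intros n x. apply Rnot_lt_le. intros Hlt.
    destruct (Hl x (Rabs (l x - u n x) - D n)) as [M HM]; [lra|].
    specialize (HM (n + M)%nat ltac:(lia)). unfold R_dist in HM.
    pose proof (Hfar n M x) as HnM. revert HM HnM Hlt. split_Rabs; lra. }
  exists l. apply functional_extensionality. intros x.
  assert (Hfix : Rabs (T l x - l x) <= 0).
  { apply (le_0_of_geometric_bound _ (2 * k * (B / (1 - k)))). intros n.
    pose proof (T_contraction l (u n) (D n) (fun y => Hlim n y) x) as Hc.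
    pose proof (Hlim (S n) x) as Hs.
    change (T (u n)) with (u (S n)) in Hc.
    replace (D (S n)) with (k * D n) in Hs by (unfold D; simpl; ring).
    replace (2 * k * (B / (1 - k)) * k ^ n) with (2 * (k * D n)) by (unfold D; ring).
    revert Hc Hs. split_Rabs; lra. }
  revert Hfix. split_Rabs; lra.
Qed.

End Contraction.

(** * The discrete sup norm *)

Lemma fold_Rmax_ge (l : list R) (x : R) : In x l -> x <= fold_right Rmax 0 l.
Proof.
  induction l as [|y l IH]; simpl; [easy|].
  intros [<-|Hx]; [apply Rmax_l|].
  eapply Rle_trans; [apply IH, Hx|apply Rmax_r].
Qed.

Lemma fold_Rmax_nonneg (l : list R) : 0 <= fold_right Rmax 0 l.
Proof.
  induction l as [|y l IH]; simpl; [lra|]. eapply Rle_trans; [exact IH|apply Rmax_r].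
Qed.

Lemma fold_Rmax_lt (l : list R) (B : R) :
  0 < B -> (forall x, In x l -> x < B) -> fold_right Rmax 0 l < B.
Proof.
  intros HB. induction l as [|y l IH]; simpl; intros Hl; [exact HB|].
  apply Rmax_lub_lt; [apply Hl; left; reflexivity|].
  apply IH. intros x Hx. apply Hl. right. exact Hx.
Qed.

Lemma fold_Rmax_In (l : list R) : In (fold_right Rmax 0 l) (0 :: l).
Proof.
  induction l as [|y l IH]; simpl; [now left|].
  destruct (Rle_dec y (fold_right Rmax 0 l)) as [Hy|Hy].
  - rewrite Rmax_right by exact Hy. destruct IH as [<-|IH]; [now left|now right; right].
  - rewrite Rmax_left by lra. now right; left.
Qed.

Lemma maxR_ge (n : nat) (g : nat -> R) (i : nat) : (1 <= i <= n)%nat -> g i <= maxR n g.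
Proof.
  intros Hi. apply fold_Rmax_ge, in_map, in_seq. lia.
Qed.

Lemma maxR_nonneg (n : nat) (g : nat -> R) : 0 <= maxR n g.
Proof. apply fold_Rmax_nonneg. Qed.

Lemma maxR_lt (n : nat) (g : nat -> R) (B : R) :
  0 < B -> (forall i, (1 <= i <= n)%nat -> g i < B) -> maxR n g < B.
Proof.
  intros HB Hg. apply fold_Rmax_lt; [exact HB|].
  intros x Hx. apply in_map_iff in Hx as [i [<- Hi]]. apply in_seq in Hi. apply Hg. lia.
Qed.

Lemma maxR_attained (n : nat) (g : nat -> R) :
  (0 < n)%nat -> (forall i, 0 <= g i) -> exists i, (1 <= i <= n)%nat /\ maxR n g = g i.
Proof.
  intros Hn Hg. destruct (fold_Rmax_In (map g (seq 1 n))) as [H0|Hin].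
  - exists 1%nat. split; [lia|]. apply Rle_antisym.
    + unfold maxR. rewrite <- H0. apply Hg.
    + apply maxR_ge. lia.
  - apply in_map_iff in Hin as [i [Hi Hseq]]. apply in_seq in Hseq.
    exists i. split; [lia|]. symmetry. exact Hi.
Qed.

Lemma normInf_ge (N : nat) (f : grid) (i j k : Z) :
  (1 <= i <= Z.of_nat N)%Z -> (1 <= j <= Z.of_nat N)%Z -> (1 <= k <= Z.of_nat N)%Z ->
  Rabs (f i j k) <= normInf N f.
Proof.
  intros Hi Hj Hk.
  rewrite <- (Z2Nat.id i), <- (Z2Nat.id j), <- (Z2Nat.id k) by lia.
  unfold normInf.
  eapply Rle_trans; [|apply (maxR_ge _ _ (Z.to_nat i)); lia].
  eapply Rle_trans; [|apply (maxR_ge _ _ (Z.to_nat j)); lia].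
  apply (maxR_ge _ (fun k' => Rabs (f _ _ (Z.of_nat k'))) (Z.to_nat k)). lia.
Qed.

Lemma normInf_lt (N : nat) (f : grid) (B : R) :
  0 < B -> (forall i j k, Rabs (f i j k) < B) -> normInf N f < B.
Proof.
  intros HB Hf. unfold normInf.
  do 3 (apply maxR_lt; [exact HB|intros ? _]). apply Hf.
Qed.

Lemma normInf_attained (N : nat) (f : grid) :
  (0 < N)%nat -> exists i j k, Rabs (f i j k) = normInf N f.
Proof.
  intros HN. unfold normInf.
  repeat match goal with
  | |- context [maxR N ?g] =>
      destruct (maxR_attained N g HN) as [? [_ ->]]; [intros; apply maxR_nonneg || apply Rabs_pos|]
  end.
  eauto.
Qed.

Lemma periodic_Z_mod {A : Type} (n : Z) (u : Z -> A) :
  (0 < n)%Z -> (forall z, u (z + n)%Z = u z) -> forall z, u z = u ((z - 1) mod n + 1)%Z.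
Proof.
  intros Hn Hu.
  assert (Hmul : forall q r, u (r + q * n)%Z = u r).
  { intros q r. induction q as [|q IH|q IH] using Z.peano_ind.
    - f_equal. lia.
    - rewrite <- IH, <- (Hu (r + q * n)%Z). f_equal. lia.
    - rewrite <- IH, <- (Hu (r + Z.pred q * n)%Z). f_equal. lia. }
  intros z. rewrite <- (Hmul ((z - 1) / n) ((z - 1) mod n + 1))%Z. f_equal.
  pose proof (Z.div_mod (z - 1) n). lia.
Qed.

Lemma periodic_abs_le_normInf (N : nat) (f : grid) :
  (0 < N)%nat -> periodic N f -> forall i j k, Rabs (f i j k) <= normInf N f.
Proof.
  intros HN Hf i j k.
  assert (HNz : (0 < Z.of_nat N)%Z) by lia.
  assert (Hrep : forall z, (1 <= (z - 1) mod Z.of_nat N + 1 <= Z.of_nat N)%Z)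
    by (intros z; pose proof (Z.mod_pos_bound (z - 1) _ HNz); lia).
  rewrite (periodic_Z_mod _ (fun z => f z j k) HNz (fun z => proj1 (Hf z j k)) i).
  rewrite (periodic_Z_mod _ (fun z => f _ z k) HNz (fun z => proj1 (proj2 (Hf _ z k))) j).
  rewrite (periodic_Z_mod _ (fun z => f _ _ z) HNz (fun z => proj2 (proj2 (Hf _ _ z))) k).
  apply normInf_ge; apply Hrep.
Qed.

Lemma grid_ext (u v : grid) : (forall i j k, u i j k = v i j k) -> u = v.
Proof.
  intros H. apply functional_extensionality. intros i.
  apply functional_extensionality. intros j.
  apply functional_extensionality. intros k. apply H.
Qed.

Definition translate (a b c : Z) (v : grid) : grid :=
  fun i j k => v (a + i)%Z (b + j)%Z (c + k)%Z.

Lemma periodic_iff_translate (N : nat) (f : grid) :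
  periodic N f <->
  translate (Z.of_nat N) 0 0 f = f /\ translate 0 (Z.of_nat N) 0 f = f /\
  translate 0 0 (Z.of_nat N) f = f.
Proof.
  unfold periodic, translate. split.
  - intros Hf. split; [|split]; apply grid_ext; intros i j k;
      destruct (Hf i j k) as (Hi & Hj & Hk); simpl; rewrite Z.add_comm; assumption.
  - intros (Ei & Ej & Ek) i j k.
    apply (f_equal (fun g => g i j k)) in Ei, Ej, Ek. simpl in Ei, Ej, Ek.
    rewrite Z.add_comm in Ei, Ej, Ek. auto.
Qed.

Definition neighbour_sum (v : grid) : grid := fun i j k =>
  v (i + 1)%Z j k + v (i - 1)%Z j k + v i (j + 1)%Z k + v i (j - 1)%Z k
  + v i j (k + 1)%Z + v i j (k - 1)%Z.

Lemma neighbour_sum_translate (a b c : Z) (v : grid) :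
  neighbour_sum (translate a b c v) = translate a b c (neighbour_sum v).
Proof.
  apply grid_ext. intros i j k. unfold neighbour_sum, translate.
  rewrite !Z.add_assoc, !Z.add_sub_assoc. reflexivity.
Qed.

Lemma neighbour_sum_abs_le (v : grid) (d : R) :
  (forall i j k, Rabs (v i j k) <= d) -> forall i j k, Rabs (neighbour_sum v i j k) <= 6 * d.
Proof.
  intros Hv i j k. unfold neighbour_sum.
  pose proof (Hv (i + 1)%Z j k). pose proof (Hv (i - 1)%Z j k).
  pose proof (Hv i (j + 1)%Z k). pose proof (Hv i (j - 1)%Z k).
  pose proof (Hv i j (k + 1)%Z). pose proof (Hv i j (k - 1)%Z).
  apply Rabs_le_between in H, H0, H1, H2, H3, H4.
  apply Rabs_le_between. lra.
Qed.

(** * The pointwise implicit operator *)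

Definition implicit_part (dt c x : R) : R :=
  x / dt + (ln (1 + x) - ln (1 - x)) + 6 * c * x.

Lemma implicit_part_opp (dt c x : R) : implicit_part dt c (- x) = - implicit_part dt c x.
Proof.
  unfold implicit_part. replace (1 + - x) with (1 - x) by ring.
  replace (1 - - x) with (1 + x) by ring. unfold Rdiv. ring.
Qed.

Section ImplicitPart.

Variables dt c : R.
Hypothesis dt_pos : 0 < dt.
Hypothesis c_nonneg : 0 <= c.

Lemma implicit_part_sub_ge (x y : R) :
  -1 < y -> y <= x -> x < 1 ->
  (/ dt + 6 * c) * (x - y) <= implicit_part dt c x - implicit_part dt c y.
Proof.
  intros Hy Hyx Hx. unfold implicit_part.
  pose proof (ln_le (1 + y) (1 + x) ltac:(lra) ltac:(lra)).
  pose proof (ln_le (1 - x) (1 - y) ltac:(lra) ltac:(lra)).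
  unfold Rdiv. lra.
Qed.

Lemma implicit_part_dist_le (x y : R) :
  -1 < x < 1 -> -1 < y < 1 ->
  (/ dt + 6 * c) * Rabs (x - y) <= Rabs (implicit_part dt c x - implicit_part dt c y).
Proof.
  intros Hx Hy. assert (0 < / dt) by (apply Rinv_0_lt_compat; exact dt_pos).
  destruct (Rle_or_lt y x) as [Hyx|Hxy].
  - pose proof (implicit_part_sub_ge x y ltac:(lra) Hyx ltac:(lra)).
    rewrite !Rabs_pos_eq; nra.
  - pose proof (implicit_part_sub_ge y x ltac:(lra) ltac:(lra) ltac:(lra)).
    rewrite !Rabs_left1; nra.
Qed.

Lemma implicit_part_le_reflect (x y : R) :
  -1 < x < 1 -> -1 < y < 1 -> implicit_part dt c x <= implicit_part dt c y -> x <= y.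
Proof.
  intros Hx Hy Hle. apply Rnot_lt_le. intros Hyx.
  assert (0 < / dt) by (apply Rinv_0_lt_compat; exact dt_pos).
  pose proof (implicit_part_sub_ge x y ltac:(lra) ltac:(lra) ltac:(lra)). nra.
Qed.

Lemma implicit_part_inj (x y : R) :
  -1 < x < 1 -> -1 < y < 1 -> implicit_part dt c x = implicit_part dt c y -> x = y.
Proof.
  intros Hx Hy E. apply Rle_antisym; apply implicit_part_le_reflect; auto; rewrite E; lra.
Qed.

Lemma implicit_part_continuous (a : R) : -1 < a < 1 -> continuity_pt (implicit_part dt c) a.
Proof.
  intros Ha. unfold implicit_part. apply derivable_continuous_pt.
  reg; eexists; apply derivable_pt_lim_ln; lra.
Qed.

Lemma implicit_part_solve (y : R) : {x : R | -1 < x < 1 /\ implicit_part dt c x = y}.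
Proof.
  (* With [1 - b = exp (- (|y| + 1))], [implicit_part b >= - ln (1 - b) > |y|]; oddness
     handles [- b]. *)
  set (b := 1 - exp (- (Rabs y + 1))).
  assert (Hexp : 0 < exp (- (Rabs y + 1)) < 1).
  { split; [apply exp_pos|]. rewrite <- exp_0 at 2. apply exp_increasing.
    pose proof (Rabs_pos y). lra. }
  assert (Hb : 0 < b < 1) by (unfold b; lra).
  assert (Hgb : Rabs y < implicit_part dt c b).
  { unfold implicit_part.
    replace (1 - b) with (exp (- (Rabs y + 1))) by (unfold b; ring). rewrite ln_exp.
    pose proof (ln_le 1 (1 + b) ltac:(lra) ltac:(lra)) as Hln. rewrite ln_1 in Hln.
    assert (0 <= b / dt) by (apply Rdiv_le_0_compat; lra).
    assert (0 <= c * b) by (apply Rmult_le_pos; lra). lra. }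
  destruct (IVT_interv (fun x => implicit_part dt c x - y) (- b) b) as [x [Hx Ex]].
  - intros a Ha. apply continuity_pt_minus; [apply implicit_part_continuous; lra|].
    apply continuity_pt_const. intros ? ?. reflexivity.
  - lra.
  - rewrite implicit_part_opp. revert Hgb. split_Rabs; lra.
  - revert Hgb. split_Rabs; lra.
  - exists x. split; lra.
Qed.

End ImplicitPart.

Lemma implicit_part_abs_max (dt c x S a : R) :
  0 <= c -> Rabs S <= 6 * Rabs x -> implicit_part dt c x = a + c * S ->
  implicit_part dt 0 (Rabs x) <= Rabs a.
Proof.
  intros Hc HS E.
  assert (Hsplit : forall z, implicit_part dt c z = implicit_part dt 0 z + 6 * c * z)
    by (intros z; unfold implicit_part; ring).
  rewrite Hsplit in E. apply Rabs_le_between in HS.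
  pose proof (Rle_abs a) as Ha. pose proof (Rle_abs (- a)) as Hna. rewrite Rabs_Ropp in Hna.
  destruct (Rle_or_lt 0 x) as [Hx|Hx].
  - rewrite Rabs_pos_eq in * by exact Hx. nra.
  - rewrite Rabs_left in * by exact Hx. rewrite implicit_part_opp. nra.
Qed.

Lemma implicit_part_threshold (dt theta d : R) :
  0 < dt -> 0 <= theta -> 0 < d <= 1 -> d <= exp (- theta) ->
  (/ dt + theta) * (1 - d) <= implicit_part dt 0 (1 - d).
Proof.
  intros Hdt Hth Hd Hde. unfold implicit_part.
  replace (1 - (1 - d)) with d by ring.
  pose proof (ln_le 1 (1 + (1 - d)) ltac:(lra) ltac:(lra)) as Hplus. rewrite ln_1 in Hplus.
  pose proof (ln_le d (exp (- theta)) ltac:(lra) Hde) as Hminus. rewrite ln_exp in Hminus.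
  unfold Rdiv. nra.
Qed.

(** * The Jacobi map *)

Definition grid_uncurry (v : grid) : Z * Z * Z -> R := fun '(i, j, k) => v i j k.

Section Jacobi.

Variables (dt c : R) (f : grid).
Hypothesis dt_pos : 0 < dt.
Hypothesis c_nonneg : 0 <= c.

Definition jacobi (v : grid) : grid := fun i j k =>
  proj1_sig (implicit_part_solve dt c dt_pos c_nonneg (f i j k + c * neighbour_sum v i j k)).

Lemma jacobi_spec (v : grid) (i j k : Z) :
  -1 < jacobi v i j k < 1 /\
  implicit_part dt c (jacobi v i j k) = f i j k + c * neighbour_sum v i j k.
Proof. exact (proj2_sig (implicit_part_solve _ _ _ _ _)). Qed.

Lemma jacobi_eq (v : grid) (i j k : Z) (x : R) :
  -1 < x < 1 -> implicit_part dt c x = f i j k + c * neighbour_sum v i j k ->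
  jacobi v i j k = x.
Proof.
  intros Hx E. destruct (jacobi_spec v i j k) as [Hj Ej].
  apply (implicit_part_inj dt c dt_pos); auto. congruence.
Qed.

Lemma jacobi_fixed_iff (v : grid) :
  jacobi v = v <->
  forall i j k, -1 < v i j k < 1 /\
    implicit_part dt c (v i j k) = f i j k + c * neighbour_sum v i j k.
Proof.
  split.
  - intros Hv i j k. pose proof (jacobi_spec v i j k) as H. rewrite Hv in H. exact H.
  - intros Hv. apply grid_ext. intros i j k. apply jacobi_eq; apply Hv.
Qed.

Definition jacobi_ratio : R := 6 * c / (/ dt + 6 * c).

Lemma jacobi_ratio_range : 0 <= jacobi_ratio < 1.
Proof.
  assert (0 < / dt) by (apply Rinv_0_lt_compat; exact dt_pos).
  unfold jacobi_ratio. split.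
  - apply Rdiv_le_0_compat; lra.
  - apply (Rdiv_lt_1 (6 * c)); lra.
Qed.

Lemma jacobi_contraction (u v : grid) (d : R) :
  (forall i j k, Rabs (u i j k - v i j k) <= d) ->
  forall i j k, Rabs (jacobi u i j k - jacobi v i j k) <= jacobi_ratio * d.
Proof.
  intros Huv i j k.
  assert (0 < / dt) by (apply Rinv_0_lt_compat; exact dt_pos).
  destruct (jacobi_spec u i j k) as [Hu Eu]. destruct (jacobi_spec v i j k) as [Hv Ev].
  pose proof (implicit_part_dist_le dt c dt_pos c_nonneg _ _ Hu Hv) as Hdist.
  assert (Hsum : Rabs (neighbour_sum u i j k - neighbour_sum v i j k) <= 6 * d).
  { replace (neighbour_sum u i j k - neighbour_sum v i j k)
      with (neighbour_sum (fun i j k => u i j k - v i j k) i j k)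
      by (unfold neighbour_sum; ring).
    apply neighbour_sum_abs_le, Huv. }
  rewrite Eu, Ev in Hdist.
  replace (f i j k + c * neighbour_sum u i j k - (f i j k + c * neighbour_sum v i j k))
    with (c * (neighbour_sum u i j k - neighbour_sum v i j k)) in Hdist by ring.
  rewrite Rabs_mult, (Rabs_pos_eq c c_nonneg) in Hdist.
  unfold jacobi_ratio. apply (Rmult_le_reg_l (/ dt + 6 * c)); [lra|].
  replace ((/ dt + 6 * c) * (6 * c / (/ dt + 6 * c) * d)) with (c * (6 * d)) by (field; split; nra).
  eapply Rle_trans; [exact Hdist|]. apply Rmult_le_compat_l; assumption.
Qed.

Lemma jacobi_translate (a b e : Z) (v : grid) :
  translate a b e f = f -> jacobi (translate a b e v) = translate a b e (jacobi v).
Proof.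
  intros Hf. apply grid_ext. intros i j k.
  assert (Hfi : f (a + i)%Z (b + j)%Z (e + k)%Z = f i j k)
    by exact (f_equal (fun g => g i j k) Hf).
  destruct (jacobi_spec v (a + i) (b + j) (e + k)) as [Hx Ex].
  apply jacobi_eq; [exact Hx|].
  rewrite neighbour_sum_translate. unfold translate. rewrite Ex, Hfi. reflexivity.
Qed.

Let jacobi_uncurried (w : Z * Z * Z -> R) : Z * Z * Z -> R :=
  grid_uncurry (jacobi (fun i j k => w (i, j, k))).

Let jacobi_uncurried_contraction (u v : Z * Z * Z -> R) (d : R) :
  (forall p, Rabs (u p - v p) <= d) ->
  forall p, Rabs (jacobi_uncurried u p - jacobi_uncurried v p) <= jacobi_ratio * d.
Proof.
  intros Huv [[i j] k]. apply jacobi_contraction. intros i' j' k'. apply Huv.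
Qed.

Lemma jacobi_fixpoint_unique (v w : grid) : jacobi v = v -> jacobi w = w -> v = w.
Proof.
  intros Hv Hw.
  assert (Hfix : forall u, jacobi u = u -> jacobi_uncurried (grid_uncurry u) = grid_uncurry u)
    by (intros u Hu; exact (f_equal grid_uncurry Hu)).
  assert (Hvw : grid_uncurry v = grid_uncurry w).
  { apply (contraction_fixpoint_unique _ jacobi_uncurried jacobi_ratio jacobi_ratio_range
             jacobi_uncurried_contraction) with (d := 2); [now apply Hfix|now apply Hfix|].
    intros [[i j] k]. simpl.
    destruct (proj1 (jacobi_fixed_iff v) Hv i j k) as [Hvr _].
    destruct (proj1 (jacobi_fixed_iff w) Hw i j k) as [Hwr _].
    apply Rabs_le_between. lra. }
  apply grid_ext. intros i j k. exact (f_equal (fun u => u (i, j, k)) Hvw).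
Qed.

Lemma jacobi_fixpoint_exists : exists v, jacobi v = v.
Proof.
  destruct (contraction_fixpoint_exists _ jacobi_uncurried jacobi_ratio jacobi_ratio_range
             jacobi_uncurried_contraction (fun _ => 0) 1) as [w Hw].
  - intros [[i j] k]. simpl. destruct (jacobi_spec (fun _ _ _ => 0) i j k) as [H _].
    apply Rabs_le_between. lra.
  - exists (fun i j k => w (i, j, k)). apply grid_ext. intros i j k.
    exact (f_equal (fun u => u (i, j, k)) Hw).
Qed.

Lemma jacobi_periodic_fixpoint (N : nat) : periodic N f -> exists v, periodic N v /\ jacobi v = v.
Proof.
  intros Hf. destruct jacobi_fixpoint_exists as [v Hv]. exists v. split; [|exact Hv].
  assert (Htr : forall a b e, translate a b e f = f -> translate a b e v = v).
  { intros a b e Hfe. apply jacobi_fixpoint_unique; [|exact Hv].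
    rewrite jacobi_translate, Hv by exact Hfe. reflexivity. }
  apply periodic_iff_translate in Hf as (Hi & Hj & Hk).
  apply periodic_iff_translate. auto.
Qed.

End Jacobi.

Lemma scheme_step_iff (eps theta0 dt h : R) (phin phi1 : grid) :
  dt <> 0 -> h <> 0 ->
  scheme_step eps theta0 dt h phin phi1 <->
  forall i j k, implicit_part dt (eps ^ 2 / h ^ 2) (phi1 i j k)
    = (/ dt + theta0) * phin i j k + eps ^ 2 / h ^ 2 * neighbour_sum phi1 i j k.
Proof.
  intros Hdt Hh.
  assert (Hres : forall i j k,
    (phi1 i j k - phin i j k) / dt + mu_next eps theta0 h phin phi1 i j k
    = implicit_part dt (eps ^ 2 / h ^ 2) (phi1 i j k)
      - ((/ dt + theta0) * phin i j k + eps ^ 2 / h ^ 2 * neighbour_sum phi1 i j k)).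
  { intros i j k. unfold mu_next, lap_h, implicit_part, neighbour_sum. field. auto. }
  unfold scheme_step. split; intros H i j k; specialize (H i j k); specialize (Hres i j k); lra.
Qed.

Lemma scheme_step_unique_solvable (eps theta0 dt h : R) (N : nat) (phin : grid) :
  0 < dt -> 0 < h -> (0 < N)%nat -> periodic N phin ->
  exists! phi1, periodic N phi1 /\ normInf N phi1 < 1 /\ scheme_step eps theta0 dt h phin phi1.
Proof.
  intros Hdt Hh HN Hphin.
  set (c := eps ^ 2 / h ^ 2).
  assert (Hc : 0 <= c) by (apply Rdiv_le_0_compat; [apply pow2_ge_0 | apply pow_lt; lra]).
  set (f i j k := (/ dt + theta0) * phin i j k).
  assert (Hf : periodic N f)
    by (intros i j k; unfold f; destruct (Hphin i j k) as (-> & -> & ->); auto).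
  assert (Hsolves : forall v, jacobi dt c f Hdt Hc v = v <->
            (forall i j k, -1 < v i j k < 1) /\ scheme_step eps theta0 dt h phin v).
  { intros v. rewrite jacobi_fixed_iff, scheme_step_iff by lra. firstorder. }
  destruct (jacobi_periodic_fixpoint dt c f Hdt Hc N Hf) as [v [Hv Hfix]].
  apply Hsolves in Hfix as [Hrange Hstep].
  exists v. split.
  - split; [exact Hv|]. split; [|exact Hstep].
    apply normInf_lt; [lra|]. intros i j k. apply Rabs_def1; apply Hrange.
  - intros w (Hw & Hnorm & Hwstep). apply (jacobi_fixpoint_unique dt c f Hdt Hc).
    + apply Hsolves. auto.
    + apply Hsolves. split; [|exact Hwstep]. intros i j k.
      pose proof (periodic_abs_le_normInf N w HN Hw i j k) as Hwb.
      apply Rabs_le_between in Hwb. lra.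
Qed.

Lemma scheme_step_separation (eps theta0 dt h d : R) (N : nat) (phin phi1 : grid) :
  0 < dt -> 0 < h -> 0 <= theta0 -> 0 < d <= 1 -> d <= exp (- theta0) -> (0 < N)%nat ->
  periodic N phin -> periodic N phi1 -> normInf N phi1 < 1 ->
  scheme_step eps theta0 dt h phin phi1 ->
  normInf N phin <= 1 - d -> normInf N phi1 <= 1 - d.
Proof.
  intros Hdt Hh Hth Hd Hde HN Hphin Hphi1 Hnorm1 Hstep Hnormn.
  set (c := eps ^ 2 / h ^ 2).
  assert (Hc : 0 <= c) by (apply Rdiv_le_0_compat; [apply pow2_ge_0 | apply pow_lt; lra]).
  destruct (normInf_attained N phi1 HN) as (i & j & k & Hmax).
  assert (Hsum : Rabs (neighbour_sum phi1 i j k) <= 6 * Rabs (phi1 i j k)).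
  { rewrite Hmax. apply neighbour_sum_abs_le, periodic_abs_le_normInf; assumption. }
  pose proof (proj1 (scheme_step_iff eps theta0 dt h phin phi1 ltac:(lra) ltac:(lra)) Hstep i j k)
    as Hloc.
  pose proof (implicit_part_abs_max dt c _ _ _ Hc Hsum Hloc) as Hbound.
  rewrite Hmax in Hbound.
  assert (Hrhs : Rabs ((/ dt + theta0) * phin i j k) <= (/ dt + theta0) * (1 - d)).
  { assert (0 < / dt) by (apply Rinv_0_lt_compat; lra).
    rewrite Rabs_mult, (Rabs_pos_eq (/ dt + theta0)) by lra.
    apply Rmult_le_compat_l; [lra|].
    eapply Rle_trans; [apply (periodic_abs_le_normInf N phin HN Hphin)|exact Hnormn]. }
  pose proof (implicit_part_threshold dt theta0 d Hdt Hth Hd Hde) as Hthreshold.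
  pose proof (Rle_trans _ _ _ (Rabs_pos _) (Req_le _ _ Hmax)) as Hmax_nonneg.
  apply (implicit_part_le_reflect dt 0 Hdt (Rle_refl 0)); lra.
Qed.

Theorem theorem2p2 (L theta0 dt : R) (N : nat) :
  0 < L -> 0 < theta0 -> 0 < dt -> (0 < N)%nat ->
  (* unique solvability with ||phi^{n+1}||_inf < 1 *)
  (forall eps : R, 0 < eps ->
   forall M : R, 0 < M ->
   forall phin : grid, periodic N phin -> normInf N phin <= M ->
   exists! phi1 : grid,
     periodic N phi1 /\ normInf N phi1 < 1 /\
     scheme_step eps theta0 dt (L / INR N) phin phi1) /\
  (* uniform separation from the singular values, independent of eps and n *)
  (forall delta0 : R, 0 < delta0 < 1 ->
   exists dstar : R, 0 < dstar < 1 /\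
   forall eps : R, 0 < eps ->
   forall phi : nat -> grid,
     periodic N (phi 0%nat) -> normInf N (phi 0%nat) <= 1 - delta0 ->
     (forall n : nat, periodic N (phi (S n)) /\ normInf N (phi (S n)) < 1 /\
        scheme_step eps theta0 dt (L / INR N) (phi n) (phi (S n))) ->
     forall n : nat, normInf N (phi n) <= 1 - dstar).
Proof.
  intros HL Htheta Hdt HN.
  assert (Hh : 0 < L / INR N) by (apply Rdiv_lt_0_compat; [exact HL | apply lt_0_INR; exact HN]).
  split.
  - intros eps _ M _ phin Hphin _. now apply scheme_step_unique_solvable.
  - intros delta0 Hdelta0.
    pose proof (exp_pos (- theta0)).
    pose proof (Rmin_l delta0 (exp (- theta0))). pose proof (Rmin_r delta0 (exp (- theta0))).
    exists (Rmin delta0 (exp (- theta0))).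
    split; [split; [apply Rmin_glb_lt|]; lra|].
    intros eps _ phi Hphi0 Hnorm0 Hstep.
    assert (Hper : forall n, periodic N (phi n)) by (intros [|n]; [exact Hphi0 | apply Hstep]).
    induction n as [|n IH]; [lra|].
    destruct (Hstep n) as (_ & Hnorm & Hsn).
    apply (scheme_step_separation eps theta0 dt (L / INR N) _ N (phi n)); auto; try lra.
    split; [apply Rmin_glb_lt|]; lra.
Qed.
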